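(* Let $n,k$ be positive integers with $n \geq 2k+1$, and let $TT_n$ be the transitive (acyclic) tournament on $n$ vertices. Then \[ \mathrm{sinv}_k(TT_n) = \mathrm{sinv}'_k(TT_n) = \begin{cases} 2 & \text{if } 2k+1 \leq n < 3k,\\ 1 & \text{if } 3k \leq n. \end{cases} \]
   Context: A tournament is an orientation of a complete graph; $TT_n$ denotes the unique (up to isomorphism) acyclic tournament on $n$ vertices. For a digraph $D$ and $X \subseteq V(D)$, inverting $X$ means reversing the direction of every arc of $D$ with both endvertices in $X$. A digraph $D$ is $k$-arc-strong if for every partition $(V_1,V_2)$ of $V(D)$ into nonempty sets there are at least $k$ arcs from $V_1$ to $V_2$; it is $k$-strong if $|V(D)|\ge k+1$ and $D-S$ is strongly connected for every $S\subseteq V(D)$ with $|S|<k$. $\mathrm{sinv}'_k(D)$ (resp. $\mathrm{sinv}_k(D)$) is the minimum number of sets whose successive inversion transforms $D$ into a $k$-arc-strong (resp. $k$-strong) digraph. *)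

From mathcomp Require Import all_boot.
Set Implicit Arguments. Unset Strict Implicit. Unset Printing Implicit Defensive.

Definition digraph (T : finType) := rel T.

Definition TT (n : nat) : digraph 'I_n := fun i j => (i < j)%N.
Arguments TT n : clear implicits.

Definition invert (T : finType) (D : digraph T) (X : {set T}) : digraph T :=
  fun x y => if (x \in X) && (y \in X) then D y x else D x y.

Definition invert_seq (T : finType) (D : digraph T) (s : seq {set T}) : digraph T :=
  foldl (@invert T) D s.

Definition arcs_out (T : finType) (D : digraph T) (V1 : {set T}) : nat :=
  #|[set p : T * T | [&& p.1 \in V1, p.2 \notin V1 & D p.1 p.2]]|.

Definition k_arc_strong (T : finType) (k : nat) (D : digraph T) : Prop :=
  forall V1 : {set T}, V1 != set0 -> ~: V1 != set0 -> (k <= arcs_out D V1)%N.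

Definition strong_minus (T : finType) (D : digraph T) (S : {set T}) : Prop :=
  forall x y : T, x \notin S -> y \notin S ->
    connect [rel u v | [&& D u v, u \notin S & v \notin S]] x y.

Definition k_strong (T : finType) (k : nat) (D : digraph T) : Prop :=
  (k + 1 <= #|T|)%N /\
  forall S : {set T}, (#|S| < k)%N -> strong_minus D S.

Definition sinv_is (T : finType) (P : digraph T -> Prop) (D : digraph T) (m : nat) : Prop :=
  (exists s : seq {set T}, size s = m /\ P (invert_seq D s)) /\
  (forall s : seq {set T}, P (invert_seq D s) -> (m <= size s)%N).

Definition sinv_eq (T : finType) (k : nat) (D : digraph T) (m : nat) : Prop :=
  sinv_is (k_strong k) D m.
Definition sinv'_eq (T : finType) (k : nat) (D : digraph T) (m : nat) : Prop :=
  sinv_is (k_arc_strong k) D m.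

(* With no inversion the last vertex of TT_n is a sink.  One inversion of a set X leaves a
   vertex of in- or out-degree below k when n < 3k: a vertex outside X among the first
   (last) k vertices has fewer than k in- (out-)neighbours, and if X contains all of these
   then vertex 0 dominates only the n - 2k < k middle vertices outside X.  As k-strong
   implies k-arc-strong, these lower bounds hold for both parameters.  Conversely, inverting
   the first and last k vertices (n >= 3k), or the even and then the odd vertices
   (n >= 2k + 1), yields a k-strong tournament: after deleting fewer than k vertices, a
   pigeonhole argument finds surviving vertices forming a cycle that every surviving vertex
   reaches and is reached from. *)

From mathcomp Require Import all_boot zify.
Set Implicit Arguments. Unset Strict Implicit. Unset Printing Implicit Defensive.

Section Digraphs.

Variables (T : finType) (D : digraph T).

Definition minus_rel (S : {set T}) : rel T :=
  [rel u v | [&& D u v, u \notin S & v \notin S]].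

Lemma minus_arc (S : {set T}) u v :
  u \notin S -> v \notin S -> D u v -> connect (minus_rel S) u v.
Proof. by move=> uS vS Duv; apply: connect1; apply/and3P. Qed.

Lemma connect_cross (e : rel T) (V : {set T}) x y :
  connect e x y -> x \in V -> y \notin V ->
  exists u w, [/\ u \in V, w \notin V & e u w].
Proof.
move/connectP=> [p + ->] {y}; elim: p x => [|z p IHp] x /=; first by move=> _ ->.
move=> /andP[exz zp] xV; have [zV|zV] := boolP (z \in V); first exact: IHp.
by exists x, z.
Qed.

Lemma k_strong_arc_strong k : k_strong k D -> k_arc_strong k D.
Proof.
move=> [cardT strongD] V V_n0 CV_n0; rewrite leqNgt /arcs_out; set A := [set _ | _].
apply/negP => few.
have [x0 x0V [y0 y0V nDxy]] : exists2 x0, x0 \in V & exists2 y0, y0 \notin V & ~~ D x0 y0.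
  (* otherwise the cut is complete, with |V| |~: V| >= #|T| - 1 >= k arcs *)
  have [/exists_inP[x0 x0V /exists_inP[y0]]|/exists_inPn full] :=
    boolP [exists x0 in V, exists y0 in ~: V, ~~ D x0 y0].
    by rewrite inE => y0V nDxy; exists x0 => //; exists y0.
  have /subset_leq_card : setX V (~: V) \subset A.
    apply/subsetP => -[a b]; rewrite !inE /= => /andP[aV bV].
    by move: (full a aV) => /exists_inPn/(_ b); rewrite inE bV negbK aV => /(_ isT) ->.
  move: (cardsC V) V_n0 CV_n0 cardT; rewrite cardsX -!card_gt0; nia.
(* Deleting, for every cut arc, an endpoint other than x0 removes fewer than k vertices,
   none of them x0 or y0 (as x0 y0 is not an arc), yet kills every cut arc. *)
pose endpoint (p : T * T) := if p.1 == x0 then p.2 else p.1.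
have : connect (minus_rel (endpoint @: A)) x0 y0.
  apply: strongD; first exact: leq_ltn_trans (leq_imset_card _ _) few.
    apply/imsetP => -[[a b]]; rewrite inE /endpoint /= => /and3P[aV bV _].
    by case: eqP => [_ b_x0|a_x0 a_x0']; [move: bV; rewrite -b_x0 x0V | apply: a_x0].
  apply/imsetP => -[[a b]]; rewrite inE /endpoint /= => /and3P[aV bV Dab].
  case: eqP => [a_x0 b_y0|_ a_y0]; first by move: nDxy; rewrite -a_x0 b_y0 Dab.
  by move: y0V; rewrite a_y0 aV.
move/connect_cross/(_ x0V y0V) => [u [w [uV wV /and3P[Duw uS wS]]]].
have /(imset_f endpoint) : (u, w) \in A by rewrite inE /= uV wV Duw.
by rewrite /endpoint /=; case: eqP => _ /= cov; [rewrite cov in wS | rewrite cov in uS].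
Qed.

Lemma arc_strong_outdeg k : 1 < #|T| -> k_arc_strong k D ->
  forall x, k <= #|[set y | D x y]|.
Proof.
move=> T_gt1 arcD x; apply: leq_trans (arcD [set x] _ _) _.
- by apply/set0Pn; exists x; rewrite inE.
- by rewrite -card_gt0 cardsC1; lia.
apply: leq_trans (leq_imset_card (pair x) _); apply/subset_leq_card/subsetP => -[a b].
by rewrite !inE /= => /and3P[/eqP-> _ Dxb]; apply: imset_f; rewrite inE.
Qed.

Lemma arc_strong_indeg k : 1 < #|T| -> k_arc_strong k D ->
  forall x, k <= #|[set y | D y x]|.
Proof.
move=> T_gt1 arcD x; apply: leq_trans (arcD (~: [set x]) _ _) _.
- by rewrite -card_gt0 cardsC1; lia.
- by rewrite setCK; apply/set0Pn; exists x; rewrite inE.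
apply: leq_trans (leq_imset_card (pair^~ x) _); apply/subset_leq_card/subsetP => -[a b].
by rewrite !inE negbK /= => /and3P[_ /eqP-> Dax]; apply: imset_f; rewrite inE.
Qed.

End Digraphs.

Lemma block_avoiding (T : finType) k m (f : 'I_k -> 'I_m -> T) (S : {set T}) :
  (forall i i' j j', f i j = f i' j' -> i = i') -> #|S| < k ->
  exists i, forall j, f i j \notin S.
Proof.
move=> f_inj ltSk.
have [/existsP[i /forallP avoid]|/existsPn meets] := boolP [exists i, [forall j, f i j \notin S]].
  by exists i.
have /fin_all_exists[h hS] : forall i, exists j, f i j \in S.
  by move=> i; have /forallPn[j] := meets i; rewrite negbK; exists j.
have g_inj : injective (fun i => f i (h i)) by move=> i i' /f_inj.
have /subset_leq_card : [set f i (h i) | i : 'I_k] \subset S.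
  by apply/subsetP => _ /imsetP[i _ ->].
by rewrite card_imset // card_ord leqNgt ltSk.
Qed.

Lemma leq_card_interval n (A : {set 'I_n}) lo hi :
  (forall a, a \in A -> lo <= a < hi) -> #|A| <= hi - lo.
Proof.
move=> A_sub; rewrite cardE -(size_map val) -(size_iota lo (hi - lo)).
apply: uniq_leq_size; first by rewrite map_inj_uniq ?enum_uniq //; apply: val_inj.
move=> x /mapP[a]; rewrite mem_enum => /A_sub/andP[lo_a a_hi] ->.
rewrite mem_iota /=; lia.
Qed.

Lemma interval_avoiding n k lo (S : {set 'I_n}) :
  lo + k <= n -> #|S| < k -> exists2 v : 'I_n, v \notin S & lo <= v < lo + k.
Proof.
case: n S => [|n] S le_n ltSk; first lia.
have valE (i : 'I_k) : @inord n (lo + i) = lo + i :> nat.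
  by rewrite inordK //; have := ltn_ord i; lia.
have [|i avoid] := @block_avoiding _ k 1 (fun i _ => inord (lo + i)) S _ ltSk.
  by move=> i i' _ _ /(congr1 val) /=; rewrite !valE => /addnI/val_inj.
by exists (inord (lo + i)); [exact: avoid ord0 | rewrite valE leq_addr ltn_add2l ltn_ord].
Qed.

Lemma parity_pair_avoiding n k a (S : {set 'I_n}) :
  2 * k + a <= n -> #|S| < k ->
  exists u v : 'I_n, [/\ u \notin S, v \notin S, odd u = odd a, odd v = ~~ odd a & u < v].
Proof.
case: n S => [|n] S le_n ltSk; first lia.
have valE (i : 'I_k) (j : 'I_2) : @inord n (2 * i + a + j) = 2 * i + a + j :> nat.
  by rewrite inordK //; have := ltn_ord i; have := ltn_ord j; lia.
have [|i avoid] := @block_avoiding _ k 2 (fun i j => inord (2 * i + a + j)) S _ ltSk.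
  move=> i i' j j' /(congr1 val) /=; rewrite !valE => eq_ii'; apply: val_inj => /=.
  by have := ltn_ord j; have := ltn_ord j'; lia.
exists (inord (2 * i + a + @ord0 1)), (inord (2 * i + a + @ord_max 1)).
by split; rewrite ?avoid ?valE //= ?addn0 ?addn1 ?oddD ?oddM /= ?addbF ?addbb //; lia.
Qed.

Lemma TT_not_arc_strong n k : 0 < k -> 1 < n -> ~ k_arc_strong k (TT n).
Proof.
case: n => [//|n] k_gt0 n_gt1 /arc_strong_outdeg; rewrite card_ord => /(_ n_gt1 ord_max).
suff -> : [set y | TT n.+1 ord_max y] = set0 by rewrite cards0 leqNgt k_gt0.
by apply/setP => y; rewrite !inE /TT ltnNge -ltnS ltn_ord.
Qed.

Lemma invert_TT_not_arc_strong n k (X : {set 'I_n}) :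
  1 < n -> n < 3 * k -> ~ k_arc_strong k (invert (TT n) X).
Proof.
move=> n_gt1 n_lt3k arcD.
have ord_gt1 : 1 < #|'I_n| by rewrite card_ord.
have outdeg (v : 'I_n) : k <= #|[set y | invert (TT n) X v y]|.
  exact: arc_strong_outdeg ord_gt1 arcD v.
have indeg (v : 'I_n) : k <= #|[set y | invert (TT n) X y v]|.
  exact: arc_strong_indeg ord_gt1 arcD v.
have arcE x y : invert (TT n) X x y = if (x \in X) && (y \in X) then y < x else x < y by [].
have notX_ge v : v \notin X -> k <= v.
  move=> vX; rewrite -[v : nat]subn0; apply: leq_trans (indeg v) (leq_card_interval _).
  by move=> a; rewrite inE arcE (negbTE vX) andbF.
have notX_lt v : v \notin X -> v + k < n.
  move=> vX; have := outdeg v; have := ltn_ord v.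
  suff : #|[set y | invert (TT n) X v y]| <= n - v.+1 by lia.
  by apply: leq_card_interval => b; rewrite inE arcE (negbTE vX) /= => ->; rewrite ltn_ord.
have n_gt0 : 0 < n by lia.
have X0 : Ordinal n_gt0 \in X by apply: contraT => /notX_ge /=; lia.
have : #|[set y | invert (TT n) X (Ordinal n_gt0) y]| <= (n - k) - k.
  apply: leq_card_interval => b; rewrite inE arcE X0 /=.
  by case: ifP => // bX _; have := notX_ge b; have := notX_lt b; rewrite bX; lia.
have := outdeg (Ordinal n_gt0); lia.
Qed.

Lemma strong_minus_invert_TT_ends n k (S : {set 'I_n}) :
  3 * k <= n -> #|S| < k ->
  strong_minus (invert (TT n) [set i : 'I_n | (i < k) || (n - k <= i)]) S.
Proof.
move=> n_ge3k ltSk; set D := invert _ _; pose E := minus_rel D S.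
have arc x y : x \notin S -> y \notin S ->
    (if ((x < k) || (n - k <= x)) && ((y < k) || (n - k <= y)) then y < x else x < y) ->
    connect E x y.
  by move=> xS yS Dxy; apply: minus_arc; rewrite // /D /invert /TT !inE.
have [|f fS /andP[_ f_lt]] := @interval_avoiding n k 0 S _ ltSk; first lia.
have [|m mS /andP[m_ge m_lt]] := @interval_avoiding n k k S _ ltSk; first lia.
have [|l lS /andP[l_ge _]] := @interval_avoiding n k (n - k) S _ ltSk; first lia.
have fm : connect E f m by apply: arc => //; case: ifP; lia.
have ml : connect E m l by apply: arc => //; case: ifP; lia.
have lf : connect E l f by apply: arc => //; case: ifP; lia.
move=> x y xS yS; apply: (@connect_trans _ _ m).
  have := ltn_ord x; case: (ltnP x k) => [x_lo|x_ge] x_lt.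
    by apply: arc => //; case: ifP; lia.
  have [x_mid|x_hi] := ltnP x (n - k).
    by apply: connect_trans (connect_trans _ lf) fm; apply: arc => //; case: ifP; lia.
  by apply: connect_trans fm; apply: arc => //; case: ifP; lia.
have := ltn_ord y; case: (ltnP y k) => [y_lo|y_ge] y_lt.
  by apply: connect_trans ml _; apply: arc => //; case: ifP; lia.
have [y_mid|y_hi] := ltnP y (n - k).
  by apply: connect_trans ml (connect_trans lf _); apply: arc => //; case: ifP; lia.
by apply: arc => //; case: ifP; lia.
Qed.

Lemma strong_minus_invert_TT_parity n k (S : {set 'I_n}) :
  2 * k + 1 <= n -> #|S| < k ->
  strong_minus (invert_seq (TT n) [:: [set i : 'I_n | ~~ odd i]; [set i : 'I_n | odd i]]) S.
Proof.
move=> n_ge ltSk; set D := invert_seq _ _; pose E := minus_rel D S.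
have arcE x y : D x y = if odd x == odd y then y < x else x < y.
  by rewrite /D /= /invert /TT !inE; case: (odd x); case: (odd y).
pose class b := [pred v : 'I_n | (v \notin S) && (odd v == b)].
have down b x y : class b x -> class b y -> y <= x -> connect E x y.
  move=> /andP[xS /eqP xb] /andP[yS /eqP yb]; rewrite leq_eqVlt => /orP[/eqP/val_inj-> //|lt_yx].
  by apply: minus_arc; rewrite // arcE xb yb eqxx.
have up b x y : class b x -> class (~~ b) y -> x < y -> connect E x y.
  move=> /andP[xS /eqP xb] /andP[yS /eqP yb] lt_xy.
  by apply: minus_arc; rewrite // arcE xb yb; case: b {xb yb}.
have [|e1 [o1 [e1S o1S e1_par o1_par lt_eo]]] := @parity_pair_avoiding n k 0 S _ ltSk.
  lia.
have [|o2 [e2 [o2S e2S o2_par e2_par lt_oe]]] := @parity_pair_avoiding n k 1 S _ ltSk.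
  lia.
have e1P : class false e1 by rewrite /= e1S e1_par.
have o1P : class true o1 by rewrite /= o1S o1_par.
have e2P : class false e2 by rewrite /= e2S e2_par.
have o2P : class true o2 by rewrite /= o2S o2_par.
case: (arg_minnP val e1P) => eb ebP eb_min.
case: (arg_maxnP val e1P) => et etP et_max.
case: (arg_minnP val o1P) => ob obP ob_min.
case: (arg_maxnP val o1P) => ot otP ot_max.
(* the extreme vertices of each parity class lie on the cycle eb -> ot -> ob -> et -> eb *)
have eb_ot : connect E eb ot.
  exact: up ebP otP (leq_ltn_trans (eb_min _ e1P) (leq_trans lt_eo (ot_max _ o1P))).
have ob_et : connect E ob et.
  exact: up obP etP (leq_ltn_trans (ob_min _ o2P) (leq_trans lt_oe (et_max _ e2P))).
have ot_ob : connect E ot ob := down _ _ _ otP obP (ob_min _ otP).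
have et_eb : connect E et eb := down _ _ _ etP ebP (eb_min _ etP).
move=> x y xS yS; apply: (@connect_trans _ _ eb).
  have : class (odd x) x by rewrite /= xS eqxx.
  case: (odd x) => xP; last exact: down xP ebP (eb_min _ xP).
  exact: connect_trans (down _ _ _ xP obP (ob_min _ xP)) (connect_trans ob_et et_eb).
apply: connect_trans eb_ot _; have : class (odd y) y by rewrite /= yS eqxx.
case: (odd y) => yP; first exact: down otP yP (ot_max _ yP).
exact: connect_trans ot_ob (connect_trans ob_et (down _ _ _ etP yP (et_max _ yP))).
Qed.

Lemma sinv_eq_sandwich (T : finType) k (D : digraph T) m :
  (exists2 s, size s = m & k_strong k (invert_seq D s)) ->
  (forall s, k_arc_strong k (invert_seq D s) -> m <= size s) ->
  sinv_eq k D m /\ sinv'_eq k D m.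
Proof.
move=> [s size_s strong_s] lower; do 2 split.
- by exists s.
- by move=> t /k_strong_arc_strong; apply: lower.
- by exists s; split=> //; apply: k_strong_arc_strong.
- exact: lower.
Qed.

Theorem theorem5p9 (n k : nat) :
  (0 < k)%N -> (2 * k + 1 <= n)%N ->
  let v := if (n < 3 * k)%N then 2 else 1 in
  sinv_eq k (TT n) v /\ sinv'_eq k (TT n) v.
Proof.
move=> k_gt0 n_ge v; have n_gt1 : 1 < n by lia.
apply: sinv_eq_sandwich.
  rewrite /v; case: ltnP => [n_lt3k|n_ge3k].
    exists [:: [set i : 'I_n | ~~ odd i]; [set i : 'I_n | odd i]] => //.
    split=> [|S ltSk]; first by rewrite card_ord; lia.
    exact: strong_minus_invert_TT_parity n_ge ltSk.
  exists [:: [set i : 'I_n | (i < k) || (n - k <= i)]] => //.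
  split=> [|S ltSk]; first by rewrite card_ord; lia.
  exact: strong_minus_invert_TT_ends n_ge3k ltSk.
move=> [|X [|Y s]] /= arcD; rewrite /v.
- by case: (TT_not_arc_strong k_gt0 n_gt1 arcD).
- by case: ifP => // n_lt3k; case: (invert_TT_not_arc_strong n_gt1 n_lt3k arcD).
- by case: ifP.
Qed.
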